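(* Let $\mathfrak{C}$ be a clustering functor on $\mathcal{M}^{inj}$ that is scale invariant: for every finite metric space $(X,d_X)$ and every $\lambda>0$, $\mathfrak{C}(X,\lambda\cdot d_X)=\mathfrak{C}(X,d_X)$. Let $K(\mathfrak{C})=\{k\geq2:\mathfrak{C}(\Delta_k(1))\text{ consists of one block}\}$. If $K(\mathfrak{C})=\emptyset$, then $\mathfrak{C}$ assigns to each finite metric space its partition into singletons. Otherwise, letting $k_{\mathfrak{C}}=\min K(\mathfrak{C})$: for each $k\geq k_{\mathfrak{C}}$, $\mathfrak{C}$ assigns to each $X\in\mathcal{M}_k$ the partition of $X$ with only one block, and for each $2\leq k<k_{\mathfrak{C}}$, $\mathfrak{C}$ assigns to each $X\in\mathcal{M}_k$ the partition of $X$ into $k$ singletons.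
   Context: $\mathcal{M}^{inj}$ is the category whose objects are finite metric spaces and whose morphisms $f:(X,d_X)\to(Y,d_Y)$ are injective distance non-increasing maps. For a set map $f:X\to Y$ and a partition $P_Y$ of $Y$, $f^*(P_Y)$ is the partition of $X$ with blocks the nonempty sets $f^{-1}(B)$, $B\in P_Y$. A clustering functor on $\mathcal{M}^{inj}$ is a rule $\mathfrak{C}$ assigning to every finite metric space $(X,d_X)$ a partition $\mathfrak{C}(X,d_X)$ of $X$ such that for every morphism $f:X\to Y$, $\mathfrak{C}(X)$ refines $f^*(\mathfrak{C}(Y))$. For $k\geq2$ and $\delta>0$, $\Delta_k(\delta)$ is the metric space with $k$ points all of whose pairwise distances equal $\delta$. $\mathcal{M}_k$ denotes the collection of finite metric spaces with exactly $k$ points. *)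

From HB Require Import structures.
From mathcomp Require Import all_boot all_order all_algebra.
From mathcomp Require Import reals.
Set Implicit Arguments. Unset Strict Implicit. Unset Printing Implicit Defensive.
Import Order.TTheory GRing.Theory Num.Theory.
Local Open Scope ring_scope.

Definition is_metric (R : realType) (T : finType) (d : T -> T -> R) : Prop :=
  [/\ forall x y, 0 <= d x y,
      forall x y, d x y = 0 <-> x = y,
      forall x y, d x y = d y x &
      forall x y z, d x z <= d x y + d y z].

Definition inj_morphism (R : realType) (X Y : finType)
  (dX : X -> X -> R) (dY : Y -> Y -> R) (f : X -> Y) : Prop :=
  injective f /\ forall x x', dY (f x) (f x') <= dX x x'.

Definition pullback_part (X Y : finType) (f : X -> Y) (PY : {set {set Y}})
  : {set {set X}} :=
  [set f @^-1: B | B : {set Y} in PY] :\ set0.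

Definition refines (X : finType) (P Q : {set {set X}}) : Prop :=
  forall A, A \in P -> exists2 B, B \in Q & A \subset B.

Definition clustering_rule (R : realType) :=
  forall (T : finType), (T -> T -> R) -> {set {set T}}.

Definition clustering_functor (R : realType) (C : clustering_rule R) : Prop :=
  (forall (T : finType) (d : T -> T -> R), is_metric d -> partition (C T d) [set: T])
  /\ (forall (X Y : finType) (dX : X -> X -> R) (dY : Y -> Y -> R) (f : X -> Y),
        is_metric dX -> is_metric dY -> inj_morphism dX dY f ->
        refines (C X dX) (pullback_part f (C Y dY))).

Definition scale_invariant (R : realType) (C : clustering_rule R) : Prop :=
  forall (T : finType) (d : T -> T -> R) (l : R), is_metric d -> 0 < l ->
    C T (fun x y => l * d x y) = C T d.

Definition Delta (R : realType) (k : nat) (delta : R) : 'I_k -> 'I_k -> R :=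
  fun x y => if x == y then 0 else delta.

Definition inK (R : realType) (C : clustering_rule R) (k : nat) : Prop :=
  (2 <= k)%N /\ C 'I_k (@Delta R k 1) = [set [set: 'I_k]].

Definition singletons_part (T : finType) : {set {set T}} := [set [set x] | x in T].
Definition one_block_part (T : finType) : {set {set T}} := [set [set: T]].

(* Each Delta_n(1) has all permutations of its points as automorphisms, so
   its clustering is either one block or all singletons, and widening
   Delta_k(1) into Delta_n(1) propagates one block to every n >= k. An
   arbitrary n-point metric space d satisfies l * Delta_n(1) <= d <= L * Delta_n(1)
   for suitable l, L > 0 along a bijection with the points of Delta_n(1); by
   scale invariance the morphisms given by these inequalities transport
   one-block clusterings from Delta_n(1) to d and singleton clusterings back
   from d to Delta_n(1). *)
From mathcomp Require Import all_boot all_order all_algebra all_fingroup.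
From mathcomp Require Import reals.
Set Implicit Arguments. Unset Strict Implicit. Unset Printing Implicit Defensive.
Import Order.TTheory GRing.Theory Num.Theory.
Local Open Scope ring_scope.

Section FiniteBounds.
Variable R : realType.

Lemma finite_pos_lower_bound (I : finType) (P : pred I) (F : I -> R) :
  (forall i, P i -> 0 < F i) -> exists2 l, 0 < l & forall i, P i -> l <= F i.
Proof.
move=> Fpos; case: (pickP P) => [i0 Pi0|P0]; last by exists 1 => // i; rewrite P0.
by case: (arg_minP F Pi0) => i Pi Fmin; exists (F i); [exact: Fpos|].
Qed.

Lemma finite_upper_bound (I : finType) (F : I -> R) :
  exists2 L, 0 < L & forall i, F i <= L.
Proof.
case: (pickP (fun _ : I => true)) => [i0 _|I0]; last by exists 1 => // i; have := I0 i.
case: (arg_maxP (i0 := i0) (P := predT) F isT) => i _ Fmax.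
exists (Num.max 1 (F i)); first by rewrite lt_max ltr01.
by move=> j; rewrite le_max; apply/orP; right; exact: Fmax.
Qed.

End FiniteBounds.

Section Metrics.
Variable R : realType.

Lemma is_metric_Delta n : is_metric (@Delta R n 1).
Proof.
rewrite /Delta; split=> [x y|x y|x y|x y z].
- by case: (x == y); rewrite ?ler01.
- by split=> [|->]; [case: eqP => // _ /eqP; rewrite oner_eq0 | rewrite eqxx].
- by rewrite eq_sym.
- case: (x =P z) => [_|nxz]; first by case: (_ == _); case: (_ == _); rewrite ?addr_ge0.
  case: (x =P y) => [exy|_]; first by subst y; rewrite add0r; case: eqP.
  by case: (_ == _); rewrite ?addr0 // lerDl.
Qed.

Lemma is_metric_scale (T : finType) (d : T -> T -> R) (l : R) :
  is_metric d -> 0 < l -> is_metric (fun x y => l * d x y).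
Proof.
case=> d_ge0 d_eq0 d_sym d_tri l_gt0; split=> [x y|x y|x y|x y z].
- by rewrite mulr_ge0 // ltW.
- by rewrite -d_eq0; split=> [/eqP|->]; rewrite ?mulr0 // mulf_eq0 gt_eqF //= => /eqP.
- by rewrite d_sym.
- by rewrite -mulrDr ler_wpM2l // ltW.
Qed.

Lemma metric_lower_bound (T : finType) (d : T -> T -> R) : is_metric d ->
  exists2 l, 0 < l & forall x y, x != y -> l <= d x y.
Proof.
case=> d_ge0 d_eq0 _ _.
have [|l l_gt0 dl] := @finite_pos_lower_bound R _ (fun p : T * T => p.1 != p.2)
  (fun p => d p.1 p.2).
  move=> [x y] /= nxy; rewrite lt_def d_ge0 andbT.
  by apply: contra nxy => /eqP /d_eq0 ->.
by exists l => // x y nxy; apply: (dl (x, y)).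
Qed.

Lemma metric_upper_bound (T : finType) (d : T -> T -> R) :
  exists2 L, 0 < L & forall x y, d x y <= L.
Proof.
have [L L_gt0 dL] := finite_upper_bound (fun p : T * T => d p.1 p.2).
by exists L => // x y; apply: (dL (x, y)).
Qed.

End Metrics.

Arguments is_metric_Delta {R n}.

Section Partitions.
Variable T : finType.
Implicit Types (P : {set {set T}}) (x y : T).

Lemma mem_pblockT P x : partition P [set: T] -> x \in pblock P x.
Proof. by case/and3P=> /eqP covP _ _; rewrite mem_pblock covP inE. Qed.

Lemma pblockT_mem P x : partition P [set: T] -> pblock P x \in P.
Proof. by case/and3P=> /eqP covP _ _; rewrite pblock_mem // covP inE. Qed.

Lemma mem_pblockT_sym P x y :
  partition P [set: T] -> y \in pblock P x -> x \in pblock P y.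
Proof.
move=> partP yPx; case/and3P: (partP) => _ trivP _.
by rewrite (same_pblock trivP yPx) mem_pblockT.
Qed.

Lemma partition_eq_singletons P : partition P [set: T] ->
  (forall x y, y \in pblock P x -> x = y) -> P = singletons_part T.
Proof.
move=> partP Pdiscrete; case/and3P: (partP) => _ trivP P0.
have pblock1 x : pblock P x = [set x].
  apply/setP=> y; rewrite inE.
  by apply/idP/eqP => [/Pdiscrete ->|->]; last exact: mem_pblockT.
apply/setP=> B; apply/idP/imsetP => [BP|[x _ ->]]; last by rewrite -pblock1 pblockT_mem.
have /set0Pn[x xB] : B != set0 by apply: contraNneq P0 => <-.
by exists x; rewrite // -pblock1 (def_pblock trivP BP xB).
Qed.

Lemma partition_eq_one_block P (x0 : T) : partition P [set: T] ->
  (forall x y, y \in pblock P x) -> P = one_block_part T.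
Proof.
move=> partP Pfull; case/and3P: (partP) => _ trivP P0.
have pblockT x : pblock P x = [set: T] by apply/setP=> y; rewrite inE Pfull.
apply/setP=> B; rewrite inE; apply/idP/eqP => [BP|->]; last first.
  by rewrite -(pblockT x0) pblockT_mem.
have /set0Pn[x xB] : B != set0 by apply: contraNneq P0 => <-.
by rewrite -(pblockT x) (def_pblock trivP BP xB).
Qed.

End Partitions.

Section ClusteringFunctor.
Variable R : realType.
Variable C : clustering_rule R.
Hypothesis C_functor : clustering_functor C.

Definition same_cluster (T : finType) (d : T -> T -> R) (x y : T) :=
  y \in pblock (C d) x.

Lemma partition_cluster (T : finType) (d : T -> T -> R) :
  is_metric d -> partition (C d) [set: T].
Proof. by case: C_functor => partC _; apply: partC. Qed.

Lemma same_cluster_morphism (X Y : finType) (dX : X -> X -> R) (dY : Y -> Y -> R)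
    (f : X -> Y) :
  is_metric dX -> is_metric dY -> inj_morphism dX dY f ->
  forall x y, same_cluster dX x y -> same_cluster dY (f x) (f y).
Proof.
move=> mX mY mf x y xy; have partX := partition_cluster mX.
case: C_functor => _ /(_ X Y dX dY f mX mY mf _ (pblockT_mem x partX)) [B].
rewrite in_setD1 => /andP[_ /imsetP[B' B'C ->]] /subsetP pXB'.
have fx : f x \in B' by have := pXB' x (mem_pblockT x partX); rewrite inE.
have fy : f y \in B' by have := pXB' y xy; rewrite inE.
case/and3P: (partition_cluster mY) => _ trivY _.
by rewrite /same_cluster (def_pblock trivY B'C fx).
Qed.

Definition Delta_cluster n (a b : 'I_n) := same_cluster (@Delta R n 1) a b.

Lemma Delta_cluster_perm n (s : {perm 'I_n}) a b :
  Delta_cluster a b -> Delta_cluster (s a) (s b).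
Proof.
move=> ab; apply: (same_cluster_morphism (f := s) is_metric_Delta is_metric_Delta _ ab).
by split=> [|x y]; [exact: perm_inj | rewrite /Delta (inj_eq perm_inj)].
Qed.

(* Transpositions fixing [a] move the partner of [a] anywhere. *)
Lemma Delta_cluster_spread n (a b : 'I_n) :
  a != b -> Delta_cluster a b -> forall e, Delta_cluster a e.
Proof.
move=> nab ab e; have [<-|nae] := eqVneq a e.
  exact/mem_pblockT/partition_cluster/is_metric_Delta.
by have := Delta_cluster_perm (tperm b e) ab; rewrite tpermL tpermD // eq_sym.
Qed.

Lemma Delta_cluster_full n (a b : 'I_n) :
  a != b -> Delta_cluster a b -> forall c e : 'I_n, Delta_cluster c e.
Proof.
move=> nab ab c e; have ac := Delta_cluster_spread nab ab c.
have [<-|nac] := eqVneq a c; first exact: Delta_cluster_spread nab ab e.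
apply: (Delta_cluster_spread (a := c) (b := a)); first by rewrite eq_sym.
exact/(mem_pblockT_sym _ ac)/partition_cluster/is_metric_Delta.
Qed.

Lemma Delta_cluster_dichotomy n :
  (forall a b : 'I_n, Delta_cluster a b) \/
  (forall a b : 'I_n, Delta_cluster a b -> a = b).
Proof.
have [/existsP[a /existsP[b /andP[nab ab]]]|noPair] :=
  boolP [exists a : 'I_n, exists b : 'I_n, (a != b) && Delta_cluster a b].
  by left; exact: Delta_cluster_full nab ab.
right=> a b ab; apply/eqP; apply: contraNT noPair => nab.
by apply/existsP; exists a; apply/existsP; exists b; rewrite nab.
Qed.

Lemma inK_Delta_cluster k : inK C k -> forall a b : 'I_k, Delta_cluster a b.
Proof.
case=> _ Ck a b; rewrite /Delta_cluster /same_cluster Ck.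
by rewrite (def_pblock (trivIset1 _) (set11 _) (in_setT a)) inE.
Qed.

Lemma Delta_cluster_inK k : (2 <= k)%N ->
  (forall a b : 'I_k, Delta_cluster a b) -> inK C k.
Proof.
move=> k_ge2 full; split=> //.
apply: (partition_eq_one_block (Ordinal (ltnW k_ge2))) => //.
exact/partition_cluster/is_metric_Delta.
Qed.

Lemma inK_Delta_cluster_widen k n : inK C k -> (k <= n)%N ->
  forall a b : 'I_n, Delta_cluster a b.
Proof.
move=> Kk kn; have k_ge2 := Kk.1.
pose a0 : 'I_k := Ordinal (ltnW k_ge2); pose b0 : 'I_k := Ordinal k_ge2.
have widen_inj : injective (widen_ord kn) by move=> u v /(congr1 val) /= /val_inj.
apply: (@Delta_cluster_full _ (widen_ord kn a0) (widen_ord kn b0)) => //.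
apply: (same_cluster_morphism is_metric_Delta is_metric_Delta _
  (inK_Delta_cluster Kk a0 b0)).
by split=> // x y; rewrite /Delta (inj_eq widen_inj).
Qed.

Hypothesis C_scale : scale_invariant C.

Lemma same_cluster_Delta (T : finType) (d : T -> T -> R) (x y : T) :
  is_metric d -> same_cluster d x y -> Delta_cluster (enum_rank x) (enum_rank y).
Proof.
move=> md xy; have [l l_gt0 dl] := metric_lower_bound md.
rewrite /Delta_cluster /same_cluster -(C_scale is_metric_Delta l_gt0).
apply: (same_cluster_morphism md (is_metric_scale is_metric_Delta l_gt0) _ xy).
split=> [|u v]; first exact: enum_rank_inj.
rewrite /Delta (inj_eq enum_rank_inj); have [->|nuv] := eqVneq u v.
  by rewrite mulr0; case: md.
by rewrite mulr1 dl.
Qed.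

Lemma Delta_same_cluster (T : finType) (d : T -> T -> R) (a b : 'I_#|T|) :
  is_metric d -> Delta_cluster a b -> same_cluster d (enum_val a) (enum_val b).
Proof.
move=> md ab; have [L L_gt0 dL] := metric_upper_bound d.
move: ab; rewrite /Delta_cluster /same_cluster -(C_scale is_metric_Delta L_gt0).
apply: (same_cluster_morphism (is_metric_scale is_metric_Delta L_gt0) md).
split=> [|u v]; first exact: enum_val_inj.
rewrite /Delta; have [->|_] := eqVneq u v; last by rewrite mulr1.
by case: md => _ d_eq0 _ _; rewrite mulr0 (proj2 (d_eq0 _ _) erefl).
Qed.

Lemma cluster_one_block_inK k (T : finType) (d : T -> T -> R) :
  is_metric d -> inK C k -> (k <= #|T|)%N -> C d = one_block_part T.
Proof.
move=> md Kk kT; have T_gt0 : (0 < #|T|)%N by apply: leq_trans kT; exact: ltnW Kk.1.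
apply: (partition_eq_one_block (enum_val (Ordinal T_gt0)) (partition_cluster md)).
move=> x y; have full := inK_Delta_cluster_widen Kk kT (enum_rank x) (enum_rank y).
by have := Delta_same_cluster md full; rewrite !enum_rankK.
Qed.

Lemma cluster_singletons_notK (T : finType) (d : T -> T -> R) :
  is_metric d -> ~ inK C #|T| -> C d = singletons_part T.
Proof.
move=> md notK; apply: (partition_eq_singletons (partition_cluster md)) => x y xy.
have [T_ge2|T_le1] := leqP 2 #|T|; last by move/card_le1_eqP: T_le1; apply; rewrite inE.
case: (Delta_cluster_dichotomy #|T|) => [full|discrete].
  by case: notK; exact: Delta_cluster_inK.
exact/enum_rank_inj/discrete/(same_cluster_Delta md).
Qed.

End ClusteringFunctor.

Theorem mainTheorem7 (R : realType) (C : clustering_rule R) :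
  clustering_functor C -> scale_invariant C ->
  ((forall k, ~ inK C k) ->
     forall (T : finType) (d : T -> T -> R), is_metric d ->
       C T d = singletons_part T)
  /\
  (forall kC : nat, inK C kC -> (forall j, inK C j -> (kC <= j)%N) ->
     (forall (T : finType) (d : T -> T -> R), is_metric d ->
        (kC <= #|T|)%N -> C T d = one_block_part T)
     /\
     (forall (T : finType) (d : T -> T -> R), is_metric d ->
        (2 <= #|T|)%N -> (#|T| < kC)%N -> C T d = singletons_part T)).
Proof.
move=> C_functor C_scale; split=> [noK T d md|kC KkC kC_min].
  exact: cluster_singletons_notK (noK #|T|).
split=> [T d md kC_T|T d md _ T_kC].
  exact: cluster_one_block_inK KkC kC_T.
apply: cluster_singletons_notK => // /kC_min.
by rewrite leqNgt T_kC.
Qed.
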